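(* Let $\mathbf t:\mathcal D\to\mathcal T$ be a refinement system and $c:A\to B$ in $\mathcal T$. For presheaves $\psi$ on $B^{-}$, $\rho$ on $B^{+}$, and $\sigma$ on $A^{-}$: (a) $(c^{+})^*({}^{\perp_B}\psi)\cong{}^{\perp_A}\big((c^{-})_!\psi\big)$ as presheaves on $A^{+}$; (b) there is a natural transformation $(c^{-})_!(\rho^{\perp_B})\Rightarrow\big((c^{+})^*\rho\big)^{\perp_A}$ of presheaves on $A^{-}$; (c) there is a natural transformation $(c^{+})_!({}^{\perp_A}\sigma)\Rightarrow{}^{\perp_B}\big((c^{-})^*\sigma\big)$ of presheaves on $B^{+}$.
   Context: A refinement system is a functor $\mathbf{t}:\mathcal{D}\to\mathcal{T}$; composition is diagrammatic. Write $P\sqsubset A$ if $\mathbf t(P)=A$; a derivation of $P\Rightarrow_cQ$ is a morphism $\alpha:P\to Q$ with $\mathbf t(\alpha)=c$. For $B\in\mathcal T$: $B^{+}$ has objects $(P,c)$, $P\sqsubset X$, $c:X\to B$, morphisms $(P_1,c_1)\to(P_2,c_2)$ the derivations of $P_1\Rightarrow_eP_2$ with $c_1=e;c_2$; $B^{-}$ is the opposite of the category with objects $(d,R)$, $d:B\to Y$, $R\sqsubset Y$, morphisms $(d_1,R_1)\to(d_2,R_2)$ the derivations of $R_1\Rightarrow_eR_2$ with $d_1;e=d_2$. For $c:A\to B$: $c^{+}:A^{+}\to B^{+}$, $(P,e)\mapsto(P,e;c)$, and $c^{-}:B^{-}\to A^{-}$, $(d,R)\mapsto(c;d,R)$, identity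 on derivations. $\mathrm{Jdg}(\mathbf t)$ has objects $(P,c,R)$ and morphisms $(P_1,c_1,R_1)\to(P_2,c_2,R_2)$ pairs of derivations $\beta$ of $P_1\Rightarrow_eP_2$, $\gamma$ of $R_2\Rightarrow_{e'}R_1$ with $c_1=e;c_2;e'$; $\mathrm{Der}:\mathrm{Jdg}(\mathbf t)^{op}\to\mathbf{Set}$ sends $(P,c,R)$ to the set of derivations of $P\Rightarrow_cR$ and $(\beta,\gamma)$ to $\alpha\mapsto\beta;\alpha;\gamma$. Bracket $\langle-\mid-\rangle_B:B^{+}\times B^{-}\to\mathrm{Jdg}(\mathbf t)$: $((P,c),(d,R))\mapsto(P,c;d,R)$, $(\beta,\gamma)\mapsto(\beta,\gamma)$. Duals with respect to $B$: for $\phi$ on $B^{+}$, $\phi^{\perp_B}(y)=$ the set of natural transformations $\phi\Rightarrow\mathrm{Der}(\langle-\mid y\rangle_B)$ (a presheaf on $B^{-}$); for $\psi$ on $B^{-}$, ${}^{\perp_B}\psi(x)=$ the set of natural transformations $\psi\Rightarrow\mathrm{Der}(\langle x\mid-\rangle_B)$ (a presheaf on $B^{+}$); similarly for $A$. For a functor $F:\mathcal X\to\mathcal Y$: $F^*\psi=\psi\circ F^{op}$ and $F_!\chi(y)=\int^{x}\mathcal Y(y,Fx)\times\chi(x)$. *)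

From Stdlib Require Import ProofIrrelevance Relations.Relation_Operators.

Set Implicit Arguments.
Unset Strict Implicit.

Lemma sig_eq A (P : A -> Prop) (x y : sig P) :
  proj1_sig x = proj1_sig y -> x = y.
Proof. destruct x, y; simpl; intros ->; f_equal; apply proof_irrelevance. Qed.

(** Categories, composition written diagrammatically: [f ;; g] = "f then g". *)
Record Category := Cat {
  ob : Type;
  hom : ob -> ob -> Type;
  idm : forall a, hom a a;
  comp : forall a b c, hom a b -> hom b c -> hom a c;
  comp_id_l : forall a b (f : hom a b), comp (idm a) f = f;
  comp_id_r : forall a b (f : hom a b), comp f (idm b) = f;
  comp_assoc : forall a b c d (f : hom a b) (g : hom b c) (h : hom c d),
      comp (comp f g) h = comp f (comp g h)
}.

Notation "f ;; g" := (comp f g) (at level 40, left associativity).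

Definition op (C : Category) : Category.
Proof.
  refine (@Cat (ob C) (fun a b => hom b a) (@idm C)
            (fun a b c f g => comp g f) _ _ _).
  - intros; apply comp_id_r.
  - intros; apply comp_id_l.
  - intros; symmetry; apply comp_assoc.
Defined.

Record Functor (C D : Category) := Fun {
  fobj : ob C -> ob D;
  fmap : forall a b, hom a b -> hom (fobj a) (fobj b);
  fmap_id : forall a, fmap (idm a) = idm (fobj a);
  fmap_comp : forall a b c (f : hom a b) (g : hom b c),
      fmap (f ;; g) = fmap f ;; fmap g
}.

(** Presheaves (functors C^op -> Set), given as data; the functor laws are
    the separate predicate [is_presheaf]. *)
Record Presheaf (C : Category) := Psh {
  pobj : ob C -> Type;
  pmap : forall a b, hom a b -> pobj b -> pobj a
}.

Arguments pobj {C} _ _.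
Arguments pmap {C} _ {a b} _ _.
Arguments fobj {C D} _ _.
Arguments fmap {C D} _ {a b} _.

Definition is_presheaf C (P : Presheaf C) : Prop :=
  (forall a (x : pobj P a), pmap P (idm a) x = x) /\
  (forall a b c (f : hom a b) (g : hom b c) (x : pobj P c),
      pmap P (f ;; g) x = pmap P f (pmap P g x)).

Definition NatTrans C (P Q : Presheaf C) : Type :=
  { eta : forall a, pobj P a -> pobj Q a |
    forall a b (f : hom a b) (x : pobj P b),
      eta a (pmap P f x) = pmap Q f (eta b x) }.

Definition psh_iso C (P Q : Presheaf C) : Prop :=
  exists (eta : NatTrans P Q) (theta : NatTrans Q P),
    (forall a x, proj1_sig theta a (proj1_sig eta a x) = x) /\
    (forall a y, proj1_sig eta a (proj1_sig theta a y) = y).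

Definition pullback X Y (F : Functor X Y) (psi : Presheaf Y) : Presheaf X :=
  @Psh X (fun x => pobj psi (fobj F x))
         (fun a b f u => pmap psi (fmap F f) u).

(** Left Kan extension F_! chi (y) = \int^x Y(y, F x) x chi(x),
    the coend being the quotient of the sum by the equivalence relation
    generated by (x, g, chi(f) u) ~ (x', g;F f, u) for f : x -> x'. *)
Section Lan.
Variables (X Y : Category) (F : Functor X Y) (chi : Presheaf X).

Definition tri (y : ob Y) : Type :=
  { x : ob X & (hom y (fobj F x) * pobj chi x)%type }.

Inductive lan_step (y : ob Y) : tri y -> tri y -> Prop :=
| lan_step_intro : forall x x' (f : hom x x') (g : hom y (fobj F x))
                     (u : pobj chi x'),
    lan_step (existT _ x (g, pmap chi f u))
             (existT _ x' (g ;; fmap F f, u)).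

Definition lan_rel (y : ob Y) := clos_refl_sym_trans (tri y) (@lan_step y).

Definition lan_obj (y : ob Y) : Type :=
  { S : tri y -> Prop | exists p, forall q, S q <-> lan_rel p q }.

Definition lan_act (y' y : ob Y) (h : hom y' y) (p : tri y) : tri y' :=
  existT _ (projT1 p) (h ;; fst (projT2 p), snd (projT2 p)).

Lemma lan_act_compat y' y (h : hom y' y) p q :
  lan_rel p q -> lan_rel (lan_act h p) (lan_act h q).
Proof.
  induction 1.
  - destruct H. unfold lan_act; simpl.
    apply rst_step. rewrite <- comp_assoc. constructor.
  - apply rst_refl.
  - apply rst_sym; assumption.
  - eapply rst_trans; eassumption.
Qed.

Lemma lan_map_proof y' y (h : hom y' y) (S : lan_obj y) :
  exists p, forall q,
    (exists p', proj1_sig S p' /\ lan_rel q (lan_act h p')) <-> lan_rel p q.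
Proof.
  destruct (proj2_sig S) as [p0 Hp0].
  exists (lan_act h p0); intros q; split.
  - intros [p [Sp Hq]]. apply Hp0 in Sp.
    eapply rst_trans. apply (lan_act_compat h Sp). apply rst_sym; exact Hq.
  - intros H. exists p0; split.
    + apply Hp0; apply rst_refl.
    + apply rst_sym; exact H.
Qed.

Definition lan_map y' y (h : hom y' y) (S : lan_obj y) : lan_obj y' :=
  exist _ (fun q => exists p', proj1_sig S p' /\ lan_rel q (lan_act h p'))
        (lan_map_proof h S).

Definition lan : Presheaf Y := @Psh Y lan_obj lan_map.
End Lan.

Section Refinement.
Variables (D T : Category) (t : Functor D T).

Record pobjT (B : ob T) := PObj { pP : ob D; pc : hom (fobj t pP) B }.

Definition Bplus (B : ob T) : Category.
Proof.
  unshelve refine (@Cat (pobjT B)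
     (fun x y => { al : hom (pP x) (pP y) | pc x = fmap t al ;; pc y })
     (fun x => exist _ (idm (pP x)) _)
     (fun x y z f g => exist _ (proj1_sig f ;; proj1_sig g) _) _ _ _).
  - rewrite fmap_id, comp_id_l; reflexivity.
  - rewrite fmap_comp, comp_assoc, <- (proj2_sig g), <- (proj2_sig f);
      reflexivity.
  - intros; apply sig_eq; simpl; apply comp_id_l.
  - intros; apply sig_eq; simpl; apply comp_id_r.
  - intros; apply sig_eq; simpl; apply comp_assoc.
Defined.

Record nobjT (B : ob T) := NObj { nR : ob D; nd : hom B (fobj t nR) }.

Definition Bminus_pre (B : ob T) : Category.
Proof.
  unshelve refine (@Cat (nobjT B)
     (fun x y => { al : hom (nR x) (nR y) | nd x ;; fmap t al = nd y })
     (fun x => exist _ (idm (nR x)) _)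
     (fun x y z f g => exist _ (proj1_sig f ;; proj1_sig g) _) _ _ _).
  - rewrite fmap_id, comp_id_r; reflexivity.
  - rewrite fmap_comp, <- comp_assoc, (proj2_sig f), (proj2_sig g);
      reflexivity.
  - intros; apply sig_eq; simpl; apply comp_id_l.
  - intros; apply sig_eq; simpl; apply comp_id_r.
  - intros; apply sig_eq; simpl; apply comp_assoc.
Defined.

Definition Bminus (B : ob T) : Category := op (Bminus_pre B).

Record jobj := JObj { jP : ob D; jR : ob D; jc : hom (fobj t jP) (fobj t jR) }.

Record jhom (a b : jobj) := JHom {
  jb : hom (jP a) (jP b);
  jg : hom (jR b) (jR a);
  jeq : jc a = fmap t jb ;; jc b ;; fmap t jg }.

Lemma jhom_eq a b (f g : jhom a b) : jb f = jb g -> jg f = jg g -> f = g.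
Proof.
  destruct f, g; simpl; intros -> ->; f_equal; apply proof_irrelevance.
Qed.

Definition Jdg : Category.
Proof.
  unshelve refine (@Cat jobj jhom
     (fun a => @JHom a a (idm (jP a)) (idm (jR a)) _)
     (fun a b c f g => @JHom a c (jb f ;; jb g) (jg g ;; jg f) _) _ _ _).
  - rewrite !fmap_id, comp_id_l, comp_id_r; reflexivity.
  - rewrite (jeq f), (jeq g), !fmap_comp, !comp_assoc; reflexivity.
  - intros; apply jhom_eq; simpl; [apply comp_id_l | apply comp_id_r].
  - intros; apply jhom_eq; simpl; [apply comp_id_r | apply comp_id_l].
  - intros; apply jhom_eq; simpl; [apply comp_assoc | symmetry; apply comp_assoc].
Defined.

Definition Der_obj (j : jobj) : Type :=
  { al : hom (jP j) (jR j) | fmap t al = jc j }.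

Definition Der_map a b (f : jhom a b) (al : Der_obj b) : Der_obj a.
Proof.
  refine (exist _ (jb f ;; proj1_sig al ;; jg f) _).
  rewrite !fmap_comp, (proj2_sig al); symmetry; exact (jeq f).
Defined.

Definition Der : Presheaf Jdg := @Psh Jdg Der_obj Der_map.

Definition bra (B : ob T) (x : pobjT B) (y : nobjT B) : jobj :=
  JObj (pc x ;; nd y).

Definition bra_mor (B : ob T) (x1 x2 : ob (Bplus B)) (y1 y2 : ob (Bminus B))
  (f : hom x1 x2) (g : hom y1 y2) : @hom Jdg (bra x1 y1) (bra x2 y2).
Proof.
  refine (@JHom (bra x1 y1) (bra x2 y2) (proj1_sig f) (proj1_sig g) _).
  simpl. generalize (proj2_sig f) (proj2_sig g). generalize (proj1_sig f) (proj1_sig g). intros bf gg Hf Hg. simpl in *. rewrite Hf, <- Hg, !comp_assoc; reflexivity.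
Defined.

Definition DerL (B : ob T) (y : ob (Bminus B)) : Presheaf (Bplus B) :=
  @Psh (Bplus B) (fun x => pobj Der (bra x y))
       (fun a b f w => pmap Der (bra_mor f (idm y)) w).

Definition DerR (B : ob T) (x : ob (Bplus B)) : Presheaf (Bminus B) :=
  @Psh (Bminus B) (fun y => pobj Der (bra x y))
       (fun a b g w => pmap Der (bra_mor (idm x) g) w).

Definition perpR_map (B : ob T) (phi : Presheaf (Bplus B))
  (y1 y2 : ob (Bminus B)) (g : hom y1 y2) (eta : NatTrans phi (DerL y2))
  : NatTrans phi (DerL y1).
Proof.
  refine (exist _ (fun a u => pmap Der (bra_mor (idm a) g) (proj1_sig eta a u)) _).
  intros a b f u. rewrite (proj2_sig eta). apply sig_eq. simpl.
  rewrite !(@comp_id_l D), !(@comp_id_r D), !(@comp_assoc D); reflexivity.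
Defined.

Definition perpR (B : ob T) (phi : Presheaf (Bplus B)) : Presheaf (Bminus B) :=
  @Psh (Bminus B) (fun y => NatTrans phi (DerL y)) (@perpR_map B phi).

Definition perpL_map (B : ob T) (psi : Presheaf (Bminus B))
  (x1 x2 : ob (Bplus B)) (f : hom x1 x2) (eta : NatTrans psi (DerR x2))
  : NatTrans psi (DerR x1).
Proof.
  refine (exist _ (fun y u => pmap Der (bra_mor f (idm y)) (proj1_sig eta y u)) _).
  intros a b g u. rewrite (proj2_sig eta). apply sig_eq. simpl.
  rewrite !(@comp_id_l D), !(@comp_id_r D), !(@comp_assoc D); reflexivity.
Defined.

Definition perpL (B : ob T) (psi : Presheaf (Bminus B)) : Presheaf (Bplus B) :=
  @Psh (Bplus B) (fun x => NatTrans psi (DerR x)) (@perpL_map B psi).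

Definition cplus (A B : ob T) (c : hom A B) : Functor (Bplus A) (Bplus B).
Proof.
  unshelve refine (@Fun (Bplus A) (Bplus B) (fun x => PObj (pc x ;; c))
     (fun x y f => exist _ (proj1_sig f) _) _ _).
  - simpl. generalize (proj2_sig f); generalize (proj1_sig f); intros al H; simpl in *. rewrite H, comp_assoc; reflexivity.
  - intros; apply sig_eq; reflexivity.
  - intros; apply sig_eq; reflexivity.
Defined.

Definition cminus (A B : ob T) (c : hom A B) : Functor (Bminus B) (Bminus A).
Proof.
  unshelve refine (@Fun (Bminus B) (Bminus A) (fun y => NObj (c ;; nd y))
     (fun x y f => exist _ (proj1_sig f) _) _ _).
  - simpl. generalize (proj2_sig f); generalize (proj1_sig f); intros al H; simpl in *. rewrite comp_assoc, H; reflexivity.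
  - intros; apply sig_eq; reflexivity.
  - intros; apply sig_eq; reflexivity.
Defined.

End Refinement.

(* The bracket is compatible with [c] on both sides: [<c^+ x | y>_B] and
   [<x | c^- y>_A] are the same judgement up to associativity of composition,
   so [Der(<c^+ x | ->_B) = (c^-)^* Der(<x | ->_A)] and
   [(c^+)^* Der(<- | y>_B) = Der(<- | c^- y>_A)].  Since [(c^-)_!] is left
   adjoint to [(c^-)^*], a transformation [(c^-)_! psi => Der(<x | ->_A)] is
   the same as one [psi => Der(<c^+ x | ->_B)], which is (a).  For (b) and
   (c), restrict a dual along [c^+] (resp. [c^-]) through the bracket
   identity and transpose the result along the adjunction. *)
From Stdlib Require Import Relations.Relation_Operators
  FunctionalExtensionality PropExtensionality ClassicalEpsilon.
Set Implicit Arguments.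
Unset Strict Implicit.

Lemma nt_eq C (P Q : Presheaf C) (e1 e2 : NatTrans P Q) :
  (forall a x, proj1_sig e1 a x = proj1_sig e2 a x) -> e1 = e2.
Proof.
  intros H; apply sig_eq, functional_extensionality_dep; intro a.
  apply functional_extensionality, H.
Qed.

Definition nt_comp C (P Q R : Presheaf C) (e1 : NatTrans P Q) (e2 : NatTrans Q R)
  : NatTrans P R.
Proof.
  refine (exist _ (fun a x => proj1_sig e2 a (proj1_sig e1 a x)) _).
  intros a b f x; rewrite (proj2_sig e1), (proj2_sig e2); reflexivity.
Defined.

Definition nt_pullback X Y (F : Functor X Y) (P Q : Presheaf Y) (e : NatTrans P Q)
  : NatTrans (pullback F P) (pullback F Q).
Proof.
  refine (exist _ (fun a x => proj1_sig e (fobj F a) x) _).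
  intros a b f x; apply (proj2_sig e).
Defined.

Lemma psh_iso_of_inverse C (P Q : Presheaf C) (eta : NatTrans P Q)
  (theta : forall a, pobj Q a -> pobj P a) :
  (forall a x, theta a (proj1_sig eta a x) = x) ->
  (forall a y, proj1_sig eta a (theta a y) = y) ->
  psh_iso P Q.
Proof.
  intros Hte Het.
  unshelve eexists eta, (exist _ theta _); [|split; assumption].
  intros a b f y.
  rewrite <- (Het b y), <- (proj2_sig eta), !Hte; reflexivity.
Qed.

Section LeftKanExtension.
Variables (X Y : Category) (F : Functor X Y) (chi : Presheaf X).

Definition lan_cls y (p : tri F chi y) : lan_obj F chi y :=
  exist _ (lan_rel p) (ex_intro _ p (fun q => conj (fun h => h) (fun h => h))).

Lemma lan_obj_ext y (S1 S2 : lan_obj F chi y) :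
  (forall q, proj1_sig S1 q <-> proj1_sig S2 q) -> S1 = S2.
Proof.
  intros H; apply sig_eq, functional_extensionality; intro q.
  apply propositional_extensionality, H.
Qed.

Lemma lan_cls_surj y (S : lan_obj F chi y) : exists p, S = lan_cls p.
Proof.
  destruct (proj2_sig S) as [p Hp]; exists p; apply lan_obj_ext, Hp.
Qed.

Lemma lan_cls_step y (p q : tri F chi y) : lan_step p q -> lan_cls p = lan_cls q.
Proof.
  intros H; apply lan_obj_ext; simpl; intros r; split; intros H'.
  - eapply rst_trans; [apply rst_sym, rst_step, H | exact H'].
  - eapply rst_trans; [apply rst_step, H | exact H'].
Qed.

Lemma lan_map_cls y' y (h : hom y' y) (p : tri F chi y) :
  lan_map h (lan_cls p) = lan_cls (lan_act h p).
Proof.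
  apply lan_obj_ext; simpl; intros q; split.
  - intros [p' [H1 H2]]. eapply rst_trans; [apply (lan_act_compat h H1)|].
    apply rst_sym, H2.
  - intros H; exists p; split; [apply rst_refl | apply rst_sym, H].
Qed.

Definition lan_lift y Z (f : tri F chi y -> Z) (S : lan_obj F chi y) : Z :=
  f (proj1_sig (constructive_indefinite_description _ (proj2_sig S))).

Lemma lan_lift_cls y Z (f : tri F chi y -> Z) :
  (forall p q, lan_step p q -> f p = f q) ->
  forall p, lan_lift f (lan_cls p) = f p.
Proof.
  intros Hf p; unfold lan_lift.
  destruct (constructive_indefinite_description _ _) as [r Hr]; simpl.
  assert (Hrel : forall p q, lan_rel p q -> f p = f q)
    by (induction 1; auto; congruence).
  symmetry; apply Hrel, Hr, rst_refl.
Qed.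

Definition lan_unit x (u : pobj chi x) : pobj (lan F chi) (fobj F x) :=
  lan_cls (existT _ x (idm (fobj F x), u)).

Lemma lan_cls_unit y x (g : hom y (fobj F x)) (u : pobj chi x) :
  lan_cls (existT _ x (g, u)) = pmap (lan F chi) g (lan_unit u).
Proof.
  cbn [pmap lan]; unfold lan_unit; rewrite lan_map_cls.
  unfold lan_act; cbn [projT1 projT2 fst snd]; rewrite comp_id_r; reflexivity.
Qed.

Section Adjunction.
Variable Z : Presheaf Y.

Definition lan_restrict (theta : NatTrans (lan F chi) Z) : NatTrans chi (pullback F Z).
Proof.
  refine (exist _ (fun x u => proj1_sig theta (fobj F x) (lan_unit u)) _).
  intros x1 x2 f u; cbn.
  rewrite <- (proj2_sig theta), <- lan_cls_unit; unfold lan_unit.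
  f_equal; etransitivity; [apply lan_cls_step; constructor|].
  rewrite comp_id_l; reflexivity.
Defined.

Hypothesis HZ : is_presheaf Z.

Definition lan_transpose_tri (alpha : NatTrans chi (pullback F Z)) y (p : tri F chi y)
  : pobj Z y := pmap Z (fst (projT2 p)) (proj1_sig alpha (projT1 p) (snd (projT2 p))).

Lemma lan_transpose_tri_step (alpha : NatTrans chi (pullback F Z)) y (p q : tri F chi y) :
  lan_step p q -> lan_transpose_tri alpha p = lan_transpose_tri alpha q.
Proof.
  destruct 1; unfold lan_transpose_tri; cbn.
  rewrite (proj2_sig alpha), (proj2 HZ); reflexivity.
Qed.

Definition lan_transpose (alpha : NatTrans chi (pullback F Z)) : NatTrans (lan F chi) Z.
Proof.
  refine (exist _ (fun y => lan_lift (@lan_transpose_tri alpha y)) _).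
  intros y' y h S; destruct (lan_cls_surj S) as [p ->].
  cbn [pmap lan]; rewrite lan_map_cls, !lan_lift_cls by apply lan_transpose_tri_step.
  unfold lan_transpose_tri, lan_act; cbn; rewrite (proj2 HZ); reflexivity.
Defined.

Lemma lan_transpose_cls (alpha : NatTrans chi (pullback F Z)) y x
  (g : hom y (fobj F x)) (u : pobj chi x) :
  proj1_sig (lan_transpose alpha) y (lan_cls (existT _ x (g, u)))
  = pmap Z g (proj1_sig alpha x u).
Proof. apply lan_lift_cls, lan_transpose_tri_step. Qed.

Lemma lan_restrict_transpose (alpha : NatTrans chi (pullback F Z)) :
  lan_restrict (lan_transpose alpha) = alpha.
Proof.
  apply nt_eq; intros x u; cbn [lan_restrict proj1_sig]; unfold lan_unit.
  rewrite lan_transpose_cls; apply (proj1 HZ).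
Qed.

Lemma lan_transpose_restrict (theta : NatTrans (lan F chi) Z) :
  lan_transpose (lan_restrict theta) = theta.
Proof.
  apply nt_eq; intros y S; destruct (lan_cls_surj S) as [[x [g u]] ->].
  rewrite lan_transpose_cls, lan_cls_unit, (proj2_sig theta); reflexivity.
Qed.

End Adjunction.
End LeftKanExtension.

Section Refinement.
Variables (D T : Category) (t : Functor D T).

Definition der_cast (P R : ob D) (c1 c2 : hom (fobj t P) (fobj t R)) (e : c1 = c2)
  (al : Der_obj (JObj c1)) : Der_obj (JObj c2) :=
  exist _ (proj1_sig al) (eq_trans (proj2_sig al) e).

Ltac der_eq := apply sig_eq; cbn;
  rewrite ?(@comp_id_l D), ?(@comp_id_r D), ?(@comp_assoc D); reflexivity.

Lemma DerR_is_presheaf B (x : ob (Bplus t B)) : is_presheaf (DerR x).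
Proof. split; intros; der_eq. Qed.

Lemma perpL_is_presheaf B (psi : Presheaf (Bminus t B)) : is_presheaf (perpL psi).
Proof. split; intros; apply nt_eq; intros; der_eq. Qed.

Lemma perpR_is_presheaf B (phi : Presheaf (Bplus t B)) : is_presheaf (perpR phi).
Proof. split; intros; apply nt_eq; intros; der_eq. Qed.

Section Bracket.
Variables (A B : ob T) (c : hom A B).

Definition DerR_cplus (x : ob (Bplus t A)) :
  NatTrans (DerR (fobj (cplus t c) x)) (pullback (cminus t c) (DerR x)).
Proof.
  refine (exist _ (fun y => der_cast (comp_assoc (pc x) c (nd y))) _).
  intros; der_eq.
Defined.

Definition DerR_cplus_inv (x : ob (Bplus t A)) :
  NatTrans (pullback (cminus t c) (DerR x)) (DerR (fobj (cplus t c) x)).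
Proof.
  refine (exist _ (fun y => der_cast (eq_sym (comp_assoc (pc x) c (nd y)))) _).
  intros; der_eq.
Defined.

Definition DerL_cminus (y : ob (Bminus t B)) :
  NatTrans (pullback (cplus t c) (DerL y)) (DerL (fobj (cminus t c) y)).
Proof.
  refine (exist _ (fun x => der_cast (comp_assoc (pc x) c (nd y))) _).
  intros; der_eq.
Defined.

Definition perpR_to_pullback (rho : Presheaf (Bplus t B)) :
  NatTrans (perpR rho) (pullback (cminus t c) (perpR (pullback (cplus t c) rho))).
Proof.
  refine (exist _ (fun y eta => nt_comp (nt_pullback (cplus t c) eta) (DerL_cminus y)) _).
  intros; apply nt_eq; intros; der_eq.
Defined.

Definition perpL_to_pullback (sigma : Presheaf (Bminus t A)) :
  NatTrans (perpL sigma) (pullback (cplus t c) (perpL (pullback (cminus t c) sigma))).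
Proof.
  refine (exist _ (fun x eta => nt_comp (nt_pullback (cminus t c) eta) (DerR_cplus_inv x)) _).
  intros; apply nt_eq; intros; der_eq.
Defined.

Definition perpL_lan (psi : Presheaf (Bminus t B)) :
  NatTrans (pullback (cplus t c) (perpL psi)) (perpL (lan (cminus t c) psi)).
Proof.
  refine (exist _ (fun x eta => lan_transpose (DerR_is_presheaf x)
                                  (nt_comp eta (DerR_cplus x))) _).
  intros x1 x2 f eta; apply nt_eq; intros y' S.
  destruct (lan_cls_surj S) as [[y [g u]] ->].
  cbn [perpL pmap perpL_map proj1_sig]; rewrite !lan_transpose_cls; der_eq.
Defined.

Definition perpL_lan_inv (psi : Presheaf (Bminus t B)) (x : ob (Bplus t A))
  (theta : NatTrans (lan (cminus t c) psi) (DerR x)) :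
  NatTrans psi (DerR (fobj (cplus t c) x)) :=
  nt_comp (lan_restrict theta) (DerR_cplus_inv x).

Lemma perpL_lan_iso (psi : Presheaf (Bminus t B)) :
  psh_iso (pullback (cplus t c) (perpL psi)) (perpL (lan (cminus t c) psi)).
Proof.
  apply psh_iso_of_inverse with (eta := perpL_lan psi) (theta := @perpL_lan_inv psi).
  - intros x eta; unfold perpL_lan_inv; cbn [perpL_lan proj1_sig].
    rewrite lan_restrict_transpose; apply nt_eq; intros; der_eq.
  - intros x theta; cbn [perpL_lan proj1_sig].
    rewrite <- (lan_transpose_restrict (DerR_is_presheaf x) theta) at 2.
    f_equal; apply nt_eq; intros; der_eq.
Qed.

End Bracket.
End Refinement.

Theorem corollary4p12 (D T : Category) (t : Functor D T) (A B : ob T)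
  (c : hom A B)
  (psi : Presheaf (Bminus t B)) (rho : Presheaf (Bplus t B))
  (sigma : Presheaf (Bminus t A)) :
  is_presheaf psi -> is_presheaf rho -> is_presheaf sigma ->
  psh_iso (pullback (cplus t c) (perpL psi))
          (perpL (lan (cminus t c) psi)) /\
  inhabited (NatTrans (lan (cminus t c) (perpR rho))
                      (perpR (pullback (cplus t c) rho))) /\
  inhabited (NatTrans (lan (cplus t c) (perpL sigma))
                      (perpL (pullback (cminus t c) sigma))).
Proof.
  intros _ _ _; split; [|split].
  - apply perpL_lan_iso.
  - constructor; exact (lan_transpose (perpR_is_presheaf _) (perpR_to_pullback c rho)).
  - constructor; exact (lan_transpose (perpL_is_presheaf _) (perpL_to_pullback c sigma)).
Qed.
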